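(* Let $w\ge 3$ and let $C_1$ be the set of vertices $x=(x_1,\dots,x_{2w})$ of the Johnson graph $J(2w,w)$ such that $(x_1,x_2,x_3,x_4,x_5)\in B$, where $B=\{(1,0,0,0,0),(1,1,0,0,0),(1,0,1,0,0),(0,0,0,1,1),(0,1,1,1,1),(0,0,1,1,1),(0,1,0,1,1),(1,1,1,0,0)\}$, and let $C_2$ be the complement of $C_1$. Then $(C_1,C_2)$ is an equitable partition with quotient matrix $\begin{pmatrix} w^2-3w+2 & 3w-2\\ w & w^2-w\end{pmatrix}$.
   Context: The Johnson graph $J(n,w)$ has as vertices the binary vectors of length $n$ with exactly $w$ ones; two vertices are adjacent iff they have exactly $w-1$ common ones. A partition $(C_1,C_2)$ of the vertex set is equitable with quotient matrix $S=(s_{ij})$ if every vertex of $C_i$ has exactly $s_{ij}$ neighbours in $C_j$. *)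

From mathcomp Require Import all_boot all_order all_algebra.
Set Implicit Arguments. Unset Strict Implicit. Unset Printing Implicit Defensive.

(* Vertices of J(n,w): binary vectors of length n with w ones, encoded as the
   set of positions (in 'I_n, 0-based) carrying a one. *)
Definition johnson_vertices (n w : nat) : {set {set 'I_n}} :=
  [set x : {set 'I_n} | #|x| == w].

Definition johnson_adj (n w : nat) : rel {set 'I_n} :=
  fun x y => #|x :&: y| == w.-1.

(* Coordinate k (0-based, i.e. x_{k+1} in the paper) of the binary vector x. *)
Definition coord (n : nat) (x : {set 'I_n}) (k : nat) : bool :=
  [exists i : 'I_n, (i \in x) && (val i == k)].

Definition prefix5 (n : nat) (x : {set 'I_n}) : seq bool :=
  [seq coord x k | k <- iota 0 5].

Definition B : seq (seq bool) :=
  [:: [:: true ; false; false; false; false];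
      [:: true ; true ; false; false; false];
      [:: true ; false; true ; false; false];
      [:: false; false; false; true ; true ];
      [:: false; true ; true ; true ; true ];
      [:: false; false; true ; true ; true ];
      [:: false; true ; false; true ; true ];
      [:: true ; true ; true ; false; false]].

Definition C1 (w : nat) : {set {set 'I_(2 * w)}} :=
  [set x in johnson_vertices (2 * w) w | prefix5 x \in B].

Definition C2 (w : nat) : {set {set 'I_(2 * w)}} :=
  johnson_vertices (2 * w) w :\: C1 w.

Definition equitable_partition2 (T : finType) (V : {set T}) (adj : rel T)
    (P1 P2 : {set T}) (S : 'M[nat]_2) : Prop :=
  let cell (i : 'I_2) := if val i == 0 then P1 else P2 in
  [/\ P1 :|: P2 = V, [disjoint P1 & P2], P1 != set0, P2 != set0 &
      forall (i j : 'I_2) (x : T), x \in cell i ->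
        #|[set y in cell j | adj x y]| = S i j].

Definition quotient_matrix (w : nat) : 'M[nat]_2 :=
  \matrix_(i < 2, j < 2)
    if val i == 0 then (if val j == 0 then w ^ 2 - 3 * w + 2 else 3 * w - 2)
    else (if val j == 0 then w else w ^ 2 - w).

From Pilot Require Import Defs.
From mathcomp Require Import all_boot all_order all_algebra zify.

(* A neighbour of x in J(n,w) is b |: x :\ a for a unique pair a \in x, b \notin x.
   Whether it lies in C1 depends only on the first five coordinates of x and on
   min(a,5), min(b,5), as all positions beyond the fifth play the same role.  Hence
   the number of neighbours in C1 is a polynomial in the prefix of x and in the
   numbers m1, m0 of ones and zeros of x beyond the prefix, which satisfy
   m1 + #ones(prefix) = w = m0 + #zeros(prefix); the 32 possible prefixes are then
   checked by arithmetic.  The second column follows since J(2w,w) is w^2-regular. *)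

Section JohnsonNeighbours.

Context {n w : nat} {x : {set 'I_n}}.
Hypotheses (w_gt0 : 0 < w) (card_x : #|x| = w).

Lemma card_swap a b : a \in x -> b \notin x -> #|b |: x :\ a| = w.
Proof.
move=> ax bx; rewrite cardsU1 !inE (negPf bx) andbF /=.
by move: card_x; rewrite (cardsD1 a) ax => <-.
Qed.

Lemma setI_swap a b : b \notin x -> x :&: (b |: x :\ a) = x :\ a.
Proof.
move=> bx; apply/setP => z; rewrite !inE.
have [->|_] := eqVneq z b; first by rewrite (negPf bx) andbF.
by case: (z \in x); rewrite ?andbT ?andbF.
Qed.

Lemma johnson_nbrP y :
  reflect (exists2 ab, ab \in setX x (~: x) & y = ab.2 |: x :\ ab.1)
          ((y \in johnson_vertices n w) && johnson_adj w x y).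
Proof.
apply: (iffP andP) => [[]|[[a b]]]; last first.
  rewrite !inE /= => /andP[ax bx] ->; split; first by rewrite card_swap.
  by rewrite /johnson_adj setI_swap // -card_x (cardsD1 a x) ax.
rewrite inE /johnson_adj => /eqP card_y /eqP card_xy.
have /cards1P[a def_a] : #|x :\: y| == 1 by rewrite cardsD card_x card_xy; lia.
have /cards1P[b def_b] : #|y :\: x| == 1 by rewrite cardsD card_y setIC card_xy; lia.
have /setDP[ax ay] : a \in x :\: y by rewrite def_a set11.
have /setDP[_ bx] : b \in y :\: x by rewrite def_b set11.
exists (a, b); first by rewrite !inE ax bx.
apply/setP => z; rewrite !inE.
move/setP/(_ z): def_a; move/setP/(_ z): def_b; rewrite !inE.
by case: (z == a); case: (z == b); case: (z \in x); case: (z \in y).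
Qed.

Lemma swap_inj :
  {in setX x (~: x) &, injective (fun ab : 'I_n * 'I_n => ab.2 |: x :\ ab.1)}.
Proof.
move=> [a b] [a' b']; rewrite !inE /= => /andP[ax bx] _ e.
have eb : b = b'.
  by move/setP/(_ b): e; rewrite !inE eqxx (negPf bx) !andbF !orbF => /esym/eqP.
have nab : a != b by apply: contraNneq bx => <-.
move/setP/(_ a): e; rewrite -eb !inE eqxx ax (negPf nab) /= andbT.
by move=> /esym/negbFE/eqP <-.
Qed.

Lemma card_johnson_nbrs_in (A : {set {set 'I_n}}) :
  A \subset johnson_vertices n w ->
  #|[set y in A | johnson_adj w x y]| = \sum_(a in x) \sum_(b in ~: x) (b |: x :\ a \in A).
Proof.
move=> sAV; pose swap ab := ab.2 |: x :\ ab.1.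
pose D := [set ab in setX x (~: x) | swap ab \in A].
transitivity #|swap @: D|.
  apply: eq_card => y; rewrite inE; apply/andP/imsetP => [[yA adj_xy]|[ab]].
    have /johnson_nbrP[ab xab def_y] : (y \in johnson_vertices n w) && johnson_adj w x y.
      by rewrite (subsetP sAV).
    by exists ab; rewrite // inE xab /swap -def_y.
  rewrite inE => /andP[xab abA] ->; split=> //.
  by case/andP: (introT (johnson_nbrP _) (ex_intro2 _ _ ab xab erefl)).
rewrite card_in_imset => [|ab ab' /setIdP[? _] /setIdP[? _]]; last exact: swap_inj.
rewrite -sum1_card pair_big_dep big_mkcond [RHS]big_mkcond; apply: eq_bigr => -[a b] _.
by rewrite !inE /=; case: (a \in x); case: (b \in x); case: (_ \in A).
Qed.

Lemma card_johnson_nbrs :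
  #|[set y in johnson_vertices n w | johnson_adj w x y]| = w * (n - w).
Proof.
rewrite card_johnson_nbrs_in // (eq_bigr (fun=> n - w)) => [|a ax].
  by rewrite sum_nat_const card_x.
rewrite (eq_bigr (fun=> 1)) => [|b]; last by rewrite inE => bx; rewrite inE card_swap ?eqxx.
by rewrite sum1_card cardsCs setCK card_ord card_x.
Qed.

End JohnsonNeighbours.

Lemma card_nbrs_setD {T : finType} {V A : {set T}} (adj : rel T) (x : T) :
  A \subset V ->
  #|[set y in A | adj x y]| + #|[set y in V :\: A | adj x y]| = #|[set y in V | adj x y]|.
Proof.
move=> sAV; rewrite -(cardsID A [set y in V | adj x y]); congr (_ + _); apply: eq_card => y.
  rewrite !inE; case: (boolP (y \in A)) => [yA|]; rewrite ?andbF //.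
  by rewrite (subsetP sAV _ yA) andbT.
by rewrite !inE; case: (y \in A); rewrite ?andbF.
Qed.

Lemma coordE n (x : {set 'I_n}) (i : 'I_n) : Defs.coord x i = (i \in x).
Proof.
apply/existsP/idP => [[j /andP[jx /eqP/val_inj <-]] // | ix].
by exists i; rewrite ix eqxx.
Qed.

Lemma coord_set {n} (P : pred nat) k : k < n -> Defs.coord [set i : 'I_n | P i] k = P k.
Proof. by move=> kn; rewrite -[k]/(val (Ordinal kn)) coordE inE. Qed.

Lemma card_ord_range n a b : b <= n -> #|[set i : 'I_n | a <= i < b]| = b - a.
Proof.
move=> bn; rewrite -sum1_card (eq_bigl (fun i : 'I_n => (a <= i) && (i < b))) => [|i];
  last by rewrite inE.
rewrite -(big_ord_widen_cond _ (leq a) (fun=> 1) bn) -(big_mkord (leq a) (fun=> 1)).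
rewrite (eq_bigl (fun i => true && (a <= i))) // -big_nat_widenl //.
by rewrite sum_nat_const_nat muln1.
Qed.

(* The prefix of [b |: x :\ a] when [c] is the indicator of [x]; the value 5 of
   [a] or [b] stands for any position outside the prefix. *)
Definition swap_pattern (c : nat -> bool) (a b : nat) : seq bool :=
  [seq (b == k) || (a != k) && c k | k <- iota 0 5].

Lemma prefix5_swap n (x : {set 'I_n}) (a b : 'I_n) : 5 <= n ->
  prefix5 (b |: x :\ a) = swap_pattern (Defs.coord x) (minn a 5) (minn b 5).
Proof.
move=> n_ge5; apply/eq_in_map => k; rewrite mem_iota => /andP[_ k_lt5].
have kn : k < n by apply: leq_trans n_ge5.
have minn_eq (c : 'I_n) : (minn c 5 == k) = (Ordinal kn == c).
  by rewrite -(inj_eq val_inj) /= eq_sym; case: (ltnP c 5) => c5; apply/eqP/eqP; lia.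
by rewrite -[k]/(val (Ordinal kn)) !coordE !inE !minn_eq.
Qed.

Lemma big_minn_split {n p} {A : {set 'I_n}} (P : pred nat) (F : nat -> nat) :
  p <= n -> (forall i : 'I_n, (i \in A) = P i) ->
  \sum_(a in A) F (minn a p) = \sum_(k < p) P k * F k + #|[set a in A | p <= a]| * F p.
Proof.
move=> pn AP; rewrite (bigID (fun a : 'I_n => a < p)) /=; congr (_ + _).
  rewrite (big_ord_widen n (fun k => P k * F k) pn) big_mkcond [RHS]big_mkcond.
  apply: eq_bigr => i _; rewrite AP.
  by case: ltnP => ip; rewrite ?andbF // andbT; case: (P i); rewrite ?mul1n.
rewrite -sum_nat_const; apply: eq_big => [i|i]; first by rewrite !inE -leqNgt.
by rewrite -leqNgt => /andP[_ /minn_idPr ->].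
Qed.

Lemma card_minn_split {n p} {A : {set 'I_n}} (P : pred nat) :
  p <= n -> (forall i : 'I_n, (i \in A) = P i) ->
  #|[set a in A | p <= a]| + \sum_(k < p) P k = #|A|.
Proof.
move=> pn AP; have /= := big_minn_split P (fun=> 1) pn AP.
rewrite sum1_card muln1 addnC => ->.
by congr (_ + _); apply: eq_bigr => k _; rewrite muln1.
Qed.

Definition swap_sum (c : nat -> bool) (m1 m0 : nat) (F : nat -> nat -> nat) : nat :=
  \sum_(a < 5) c a * (\sum_(b < 5) ~~ c b * F a b + m0 * F a 5)
  + m1 * (\sum_(b < 5) ~~ c b * F 5 b + m0 * F 5 5).

Lemma sum_swap_minn {n} (x : {set 'I_n}) (F : nat -> nat -> nat) : 5 <= n ->
  \sum_(a in x) \sum_(b in ~: x) F (minn a 5) (minn b 5)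
  = swap_sum (Defs.coord x) #|[set a in x | 5 <= a]| #|[set b in ~: x | 5 <= b]| F.
Proof.
move=> n_ge5; have xc (i : 'I_n) : (i \in x) = Defs.coord x i by rewrite coordE.
have xCc (i : 'I_n) : (i \in ~: x) = ~~ Defs.coord x i by rewrite inE xc.
under eq_bigr => a _ do
  rewrite (big_minn_split (fun k => ~~ Defs.coord x k) (F (minn a 5)) n_ge5 xCc).
pose G a := \sum_(k < 5) ~~ Defs.coord x k * F a k + #|[set b in ~: x | 5 <= b]| * F a 5.
exact: (big_minn_split _ G n_ge5 xc).
Qed.

Lemma swap_sum_BE (c : nat -> bool) {m1 m0 w : nat} : 3 <= w ->
  m1 + \sum_(k < 5) c k = w -> m0 + \sum_(k < 5) ~~ c k = w ->
  swap_sum c m1 m0 (fun a b => swap_pattern c a b \in B)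
  = if [seq c k | k <- iota 0 5] \in B then w ^ 2 - 3 * w + 2 else w.
Proof.
rewrite /swap_sum /swap_pattern !big_ord_recr !big_ord0 /= => w_ge3.
by case: (c 0); case: (c 1); case: (c 2); case: (c 3); case: (c 4) => /= ? ?; nia.
Qed.

Lemma C1_sub_johnson w : C1 w \subset johnson_vertices (2 * w) w.
Proof. by apply/subsetP => y; rewrite inE => /andP[]. Qed.

Lemma card_C1_nbrs w (x : {set 'I_(2 * w)}) : 3 <= w -> x \in johnson_vertices (2 * w) w ->
  #|[set y in C1 w | johnson_adj w x y]| = if prefix5 x \in B then w ^ 2 - 3 * w + 2 else w.
Proof.
rewrite inE => w_ge3 /eqP card_x; have n_ge5 : 5 <= 2 * w by lia.
have xc (i : 'I_(2 * w)) : (i \in x) = Defs.coord x i by rewrite coordE.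
have xCc (i : 'I_(2 * w)) : (i \in ~: x) = ~~ Defs.coord x i by rewrite inE xc.
rewrite (card_johnson_nbrs_in (ltnW (ltnW w_ge3)) card_x) ?C1_sub_johnson //.
under eq_bigr => a ax do under eq_bigr => b bx do
  rewrite inE /johnson_vertices inE (card_swap card_x) -?in_setC // eqxx /= prefix5_swap //.
rewrite (sum_swap_minn x (fun a b => swap_pattern (Defs.coord x) a b \in B)) //.
rewrite (swap_sum_BE _ w_ge3) //.
  by rewrite (card_minn_split _ n_ge5 xc).
rewrite (card_minn_split (fun k => ~~ Defs.coord x k) n_ge5 xCc).
by rewrite cardsCs setCK card_ord; lia.
Qed.

Lemma card_C2_nbrs w (x : {set 'I_(2 * w)}) : 3 <= w -> x \in johnson_vertices (2 * w) w ->
  #|[set y in C2 w | johnson_adj w x y]| = if prefix5 x \in B then 3 * w - 2 else w ^ 2 - w.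
Proof.
move=> w_ge3 xV; have /eqP card_x : #|x| == w by rewrite inE in xV.
have := card_nbrs_setD (johnson_adj w) x (C1_sub_johnson w).
rewrite (card_johnson_nbrs (ltnW (ltnW w_ge3)) card_x) card_C1_nbrs // -/(C2 w).
rewrite (_ : 2 * w - w = w); last by lia.
have : 3 * w <= w * w by rewrite leq_mul2r w_ge3 orbT.
(* [lia] fails on the cardinal itself, whose type depends on [w]: abstract it first. *)
case: ifP => _; rewrite expnS expn1; set N := #|_|; lia.
Qed.

Lemma interval_in_C1 w : 3 <= w -> [set i : 'I_(2 * w) | 3 <= i < w + 3] \in C1 w.
Proof.
move=> w_ge3; rewrite inE /johnson_vertices inE card_ord_range ?addnK ?eqxx /=; last by lia.
rewrite /prefix5 /= !(coord_set (fun k => 3 <= k < w + 3)) /=; try lia.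
by have [-> ->] : 3 < w + 3 /\ 4 < w + 3 by lia.
Qed.

Lemma in_C1 w x : (x \in C1 w) = (x \in johnson_vertices (2 * w) w) && (prefix5 x \in B).
Proof. by rewrite [LHS]inE. Qed.

Lemma in_C2 w x : (x \in C2 w) = (x \in johnson_vertices (2 * w) w) && (prefix5 x \notin B).
Proof. by rewrite [LHS]inE in_C1 andbC; case: (_ \in johnson_vertices _ _). Qed.

Theorem mainTheorem3 (w : nat) (hw : 3 <= w) :
  equitable_partition2 (johnson_vertices (2 * w) w) (@johnson_adj (2 * w) w)
    (C1 w) (C2 w) (quotient_matrix w).
Proof.
have C1_sub := C1_sub_johnson w.
have cell_nbrs (i j : 'I_2) x : x \in (if val i == 0 then C1 w else C2 w) ->
    #|[set y in (if val j == 0 then C1 w else C2 w) | johnson_adj w x y]|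
    = quotient_matrix w i j.
  rewrite mxE; case: i => -[|[|//]] _ /=; rewrite ?in_C1 ?in_C2 => /andP[xV xB];
  by case: j => -[|[|//]] _ /=; rewrite ?card_C1_nbrs ?card_C2_nbrs // ?(negPf xB) ?xB.
set x0 := [set i : 'I_(2 * w) | 3 <= i < w + 3].
have x0C1 : x0 \in C1 w := interval_in_C1 w hw.
have /card_gt0P[y] : 0 < #|[set y in C2 w | johnson_adj w x0 y]|.
  by rewrite (cell_nbrs ord0 ord_max) // mxE /=; lia.
rewrite inE => /andP[y_C2 _]; split; last exact: cell_nbrs.
- by rewrite -[RHS](setID _ (C1 w)) (setIidPr C1_sub).
- by rewrite disjoint_sym disjoints_subset subsetDr.
- by apply/set0Pn; exists x0.
- by apply/set0Pn; exists y.
Qed.
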